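(* Let $\Delta\subset\mathbf R^2$ be the triangle with vertices $(0,0),(1,0),(0,1)$ and let $U=\{(a,b,c)\in\mathbf R^3: a\mu_1+b\mu_2+c>0 \text{ for all }(\mu_1,\mu_2)\in\Delta\}$. Consider $$E(a,b,c)=8\pi^2\,\frac{\left(\int_{\partial\Delta}(a\mu_1+b\mu_2+c)^{-2}\,d\sigma\right)^2}{\int_\Delta(a\mu_1+b\mu_2+c)^{-4}\,d\mu}$$ on $U$, a function invariant under positive scaling, hence defined on $U/\mathbf R_+$. Then the only critical point of $E$ on $U/\mathbf R_+$ is $[(0,0,1)]$.
   Context: $d\mu$ is Lebesgue measure on $\Delta$ and $d\sigma$ is the boundary measure on $\partial\Delta$ induced in the standard way for Delzant polytopes (on each facet, the measure for which $d\mu$ equals $d\sigma$ times the derivative of the defining affine function with primitive integral normal). $E$ is the square of the normalized Einstein–Hilbert functional of the conformal metric $f^{-2}g$ on toric $\mathbf{CP}^2$ with $f=a\mu_1+b\mu_2+c$. *)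

From Stdlib Require Import Reals ClassicalEpsilon.
Open Scope R_scope.

(** Riemann integral of f over [a,b] as a total function: the (proof-independent)
    value RiemannInt pr when f is Riemann integrable, an arbitrary value otherwise. *)
Definition RInt (f : R -> R) (a b : R) : R :=
  epsilon (inhabits 0)
    (fun I => exists pr : Riemann_integrable f a b, RiemannInt pr = I).

Definition inDelta (m1 m2 : R) : Prop := 0 <= m1 /\ 0 <= m2 /\ m1 + m2 <= 1.

Definition inU (a b c : R) : Prop :=
  forall m1 m2, inDelta m1 m2 -> 0 < a * m1 + b * m2 + c.

Definition int_Delta (g : R -> R -> R) : R :=
  RInt (fun x => RInt (fun y => g x y) 0 (1 - x)) 0 1.

(** Integral over the boundary with the Delzant boundary measure d sigma:
    facet {m1 = 0}: d sigma = d m2;  facet {m2 = 0}: d sigma = d m1;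
    facet {m1 + m2 = 1} (affine function 1 - m1 - m2, primitive normal (-1,-1)):
    d sigma = d m1 in the parametrization m1 = t, m2 = 1 - t. *)
Definition int_bdry (g : R -> R -> R) : R :=
  RInt (fun t => g 0 t) 0 1 + RInt (fun t => g t 0) 0 1
  + RInt (fun t => g t (1 - t)) 0 1.

Definition faff (a b c m1 m2 : R) : R := a * m1 + b * m2 + c.

Definition E (a b c : R) : R :=
  8 * PI ^ 2 * (int_bdry (fun m1 m2 => / (faff a b c m1 m2) ^ 2)) ^ 2
  / int_Delta (fun m1 m2 => / (faff a b c m1 m2) ^ 4).

Definition critical_E (a b c : R) : Prop :=
  derivable_pt_lim (fun x => E x b c) a 0 /\
  derivable_pt_lim (fun y => E a y c) b 0 /\
  derivable_pt_lim (fun z => E a b z) c 0.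

From Pilot Require Import Defs.
From Stdlib Require Import Reals Lra Psatz ClassicalEpsilon.
From Coquelicot Require Import Coquelicot.
Open Scope R_scope.

(** An affine function f = a m1 + b m2 + c is determined by its values at the
    three vertices of the triangle Delta:
      p = f(0,0) = c,   q = f(1,0) = a + c,   r = f(0,1) = b + c,
    and f > 0 on Delta forces p, q, r > 0.  Both integrals defining E can be
    computed in closed form in these vertex values (each by the fundamental
    theorem of calculus with an explicit rational antiderivative):
      int_{dDelta} f^-2 dsigma = (p+q+r)/(pqr),
      int_Delta f^-4 dmu       = (pq+qr+rp)/(6 p^2 q^2 r^2),
    so that  E = G p q r := 48 pi^2 (p+q+r)^2 / (pq+qr+rp),  a symmetric
    function.  Its partial derivative in p is proportional to p(q+r) - q^2 - r^2.
    Since a (resp. b) enters only through q (resp. r), dE/da and dE/db are such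
    partials of G, and their vanishing forces p = q = r, i.e. a = b = 0.
    Conversely at (0,0,t) both partials vanish and E(0,0,.) is locally
    constant, so (0,0,t) is critical. *)

(** Side conditions of [auto_derive]/[field]: a product of powers of
    quantities known to be positive is nonzero. *)
Ltac nonzero :=
  repeat (apply Rmult_integral_contrapositive_currified || apply pow_nonzero); lra.

Lemma RInt_of_is_RInt (f : R -> R) (a b v : R) :
  is_RInt f a b v -> Defs.RInt f a b = v.
Proof.
  intros Hv.
  assert (pr : Riemann_integrable f a b) by (apply ex_RInt_Reals_0; exists v; exact Hv).
  unfold Defs.RInt.
  destruct (epsilon_spec (inhabits 0)
    (fun I => exists pr : Riemann_integrable f a b, RiemannInt pr = I))
    as [pr' <-].
  { exists (RiemannInt pr), pr; reflexivity. }
  rewrite <- RInt_Reals. apply is_RInt_unique; exact Hv.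
Qed.

Lemma is_RInt_antiderivative (F f : R -> R) (a b : R) : a <= b ->
  (forall x, a <= x <= b -> is_derive F x (f x)) ->
  (forall x, a <= x <= b -> continuous f x) ->
  is_RInt f a b (F b - F a).
Proof.
  intros Hab HF Hf.
  apply (is_RInt_derive F f); intros x Hx;
    rewrite Rmin_left, Rmax_right in Hx by exact Hab; auto.
Qed.

Lemma affine_pos_on_segment (u be L y : R) :
  0 < u -> 0 < u + be * L -> 0 <= y <= L -> 0 < u + be * y.
Proof.
  intros Hu Hw Hy. destruct (Rle_dec 0 be).
  - assert (0 <= be * y) by (apply Rmult_le_pos; lra). lra.
  - assert (be * L <= be * y) by (apply Rmult_le_compat_neg_l; lra). lra.
Qed.

Lemma segment_integral_inv2 (u v : R) : 0 < u -> 0 < v ->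
  is_RInt (fun t => / (u + (v - u) * t) ^ 2) 0 1 (1 / (u * v)).
Proof.
  intros Hu Hv.
  assert (Hpos : forall t, 0 <= t <= 1 -> 0 < u + (v - u) * t)
    by (intros t Ht; apply (affine_pos_on_segment _ _ 1); lra).
  replace (1 / (u * v)) with
    (1 / (u * (u + (v - u) * 1)) - 0 / (u * (u + (v - u) * 0))) by (field; lra).
  apply (is_RInt_antiderivative (fun t => t / (u * (u + (v - u) * t)))); [lra | |];
    intros t Ht; specialize (Hpos t Ht).
  - auto_derive; [nonzero | field; lra].
  - apply (@ex_derive_continuous R_AbsRing R_NormedModule). auto_derive. nonzero.
Qed.

Lemma segment_integral_inv4 (u be L w : R) :
  0 <= L -> 0 < u -> 0 < w -> u + be * L = w ->
  is_RInt (fun y => / (u + be * y) ^ 4) 0 L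
    (L * (u ^ 2 + u * w + w ^ 2) / (3 * u ^ 3 * w ^ 3)).
Proof.
  intros HL Hu Hw <-.
  assert (Hpos : forall y, 0 <= y <= L -> 0 < u + be * y)
    by (intros y Hy; apply (affine_pos_on_segment _ _ L); lra).
  set (F := fun y => y * (u ^ 2 + u * (u + be * y) + (u + be * y) ^ 2)
                      / (3 * u ^ 3 * (u + be * y) ^ 3)).
  replace (L * (u ^ 2 + u * (u + be * L) + (u + be * L) ^ 2)
             / (3 * u ^ 3 * (u + be * L) ^ 3)) with (F L - F 0)
    by (unfold F; field; lra).
  apply is_RInt_antiderivative; [lra | |]; intros y Hy; specialize (Hpos y Hy).
  - unfold F. auto_derive; [nonzero | field; lra].
  - apply (@ex_derive_continuous R_AbsRing R_NormedModule). auto_derive. nonzero.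
Qed.

Definition sigma2 (p q r : R) : R := p * q + q * r + r * p.

Lemma sigma2_pos (p q r : R) : 0 < p -> 0 < q -> 0 < r -> 0 < sigma2 p q r.
Proof.
  intros Hp Hq Hr. unfold sigma2.
  assert (0 < p * q) by (apply Rmult_lt_0_compat; lra).
  assert (0 < q * r) by (apply Rmult_lt_0_compat; lra).
  assert (0 < r * p) by (apply Rmult_lt_0_compat; lra).
  lra.
Qed.

(** The outer integrand of [int_Delta]: the integral of f^-4 over the vertical
    segment at abscissa x, where f(x,0) = p + (q-p)x and f(x,1-x) = r + (q-r)x. *)
Definition column_integral (p q r x : R) : R :=
  let u := p + (q - p) * x in let w := r + (q - r) * x in
  (1 - x) * (u ^ 2 + u * w + w ^ 2) / (3 * u ^ 3 * w ^ 3).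

(** An antiderivative of [column_integral]: minus the integral of f^-4 over the
    corner triangle {m1 >= x} with vertex values u, q, w and area (1-x)^2/2. *)
Definition corner_integral (p q r x : R) : R :=
  let u := p + (q - p) * x in let w := r + (q - r) * x in
  - (1 - x) ^ 2 * sigma2 u q w / (6 * u ^ 2 * q ^ 2 * w ^ 2).

Lemma int_column (p q r : R) : 0 < p -> 0 < q -> 0 < r ->
  is_RInt (column_integral p q r) 0 1 (sigma2 p q r / (6 * p ^ 2 * q ^ 2 * r ^ 2)).
Proof.
  intros Hp Hq Hr.
  replace (sigma2 p q r / (6 * p ^ 2 * q ^ 2 * r ^ 2))
    with (corner_integral p q r 1 - corner_integral p q r 0)
    by (unfold corner_integral, sigma2; field; lra).
  apply is_RInt_antiderivative; [lra | |]; intros x Hx;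
    assert (Hu : 0 < p + (q - p) * x) by (apply (affine_pos_on_segment _ _ 1); lra);
    assert (Hw : 0 < r + (q - r) * x) by (apply (affine_pos_on_segment _ _ 1); lra).
  - unfold corner_integral, column_integral, sigma2. auto_derive.
    + nonzero.
    + field. lra.
  - apply (@ex_derive_continuous R_AbsRing R_NormedModule). unfold column_integral. auto_derive.
    nonzero.
Qed.

Lemma inU_vertices (a b c : R) : inU a b c -> 0 < c /\ 0 < a + c /\ 0 < b + c.
Proof.
  intros HU.
  pose proof (HU 0 0 ltac:(unfold inDelta; lra)).
  pose proof (HU 1 0 ltac:(unfold inDelta; lra)).
  pose proof (HU 0 1 ltac:(unfold inDelta; lra)).
  lra.
Qed.

Lemma int_bdry_closed (a b c : R) : 0 < c -> 0 < a + c -> 0 < b + c ->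
  int_bdry (fun m1 m2 => / (faff a b c m1 m2) ^ 2)
  = (c + (a + c) + (b + c)) / (c * (a + c) * (b + c)).
Proof.
  intros Hp Hq Hr. unfold int_bdry, faff.
  rewrite (RInt_of_is_RInt _ 0 1 (1 / (c * (b + c)))),
          (RInt_of_is_RInt _ 0 1 (1 / (c * (a + c)))),
          (RInt_of_is_RInt _ 0 1 (1 / ((b + c) * (a + c)))).
  - field. lra.
  - eapply is_RInt_ext; [| apply (segment_integral_inv2 (b + c) (a + c)); lra].
    intros t _. cbv beta. f_equal. ring.
  - eapply is_RInt_ext; [| apply (segment_integral_inv2 c (a + c)); lra].
    intros t _. cbv beta. f_equal. ring.
  - eapply is_RInt_ext; [| apply (segment_integral_inv2 c (b + c)); lra].
    intros t _. cbv beta. f_equal. ring.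
Qed.

Lemma int_Delta_closed (a b c : R) : 0 < c -> 0 < a + c -> 0 < b + c ->
  int_Delta (fun m1 m2 => / (faff a b c m1 m2) ^ 4)
  = sigma2 c (a + c) (b + c) / (6 * c ^ 2 * (a + c) ^ 2 * (b + c) ^ 2).
Proof.
  intros Hp Hq Hr. unfold int_Delta.
  apply RInt_of_is_RInt.
  eapply is_RInt_ext; [| apply int_column; lra].
  intros x Hx. rewrite Rmin_left, Rmax_right in Hx by lra.
  symmetry. apply RInt_of_is_RInt.
  eapply is_RInt_ext.
  - intros y _. unfold faff. replace (a * x + b * y + c) with ((c + a * x) + b * y) by ring.
    reflexivity.
  - unfold column_integral.
    replace (c + (a + c - c) * x) with (c + a * x) by ring.
    apply segment_integral_inv4; try lra.
    + apply (affine_pos_on_segment _ _ 1); lra.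
    + replace (b + c + (a + c - (b + c)) * x) with ((b + c) + (a - b) * x) by ring.
      apply (affine_pos_on_segment _ _ 1); lra.
Qed.

Definition G (p q r : R) : R := 48 * PI ^ 2 * (p + q + r) ^ 2 / sigma2 p q r.

Lemma G_swap (p q r : R) : G p q r = G q p r.
Proof. unfold G, sigma2. f_equal; [f_equal; f_equal; ring | ring]. Qed.

Lemma G_rotate (p q r : R) : G p q r = G r p q.
Proof. unfold G, sigma2. f_equal; [f_equal; f_equal; ring | ring]. Qed.

Lemma E_closed (a b c : R) : 0 < c -> 0 < a + c -> 0 < b + c ->
  E a b c = G c (a + c) (b + c).
Proof.
  intros Hp Hq Hr. pose proof (sigma2_pos _ _ _ Hp Hq Hr).
  unfold E. rewrite int_bdry_closed, int_Delta_closed by lra.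
  unfold G, sigma2 in *. field. lra.
Qed.

Definition dG (p q r : R) : R :=
  48 * PI ^ 2 * (p + q + r) * (p * (q + r) - q ^ 2 - r ^ 2) / (sigma2 p q r) ^ 2.

Lemma dG_zero (p q r : R) : 0 < p -> 0 < q -> 0 < r ->
  dG p q r = 0 -> p * (q + r) = q ^ 2 + r ^ 2.
Proof.
  intros Hp Hq Hr H0. pose proof (sigma2_pos _ _ _ Hp Hq Hr). pose proof PI_RGT_0.
  assert (Hnum : p * (q + r) - q ^ 2 - r ^ 2
                 = dG p q r * sigma2 p q r ^ 2 / (48 * PI ^ 2 * (p + q + r)))
    by (unfold dG; field; split; nonzero).
  rewrite H0 in Hnum. unfold Rdiv in Hnum. lra.
Qed.

Lemma dG_diagonal (t : R) : dG t t t = 0.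
Proof. unfold dG. unfold Rdiv. ring. Qed.

Lemma derivable_shifted_G (h : R -> R) (x0 s q r : R) :
  0 < x0 + s -> 0 < q -> 0 < r ->
  (forall x, 0 < x + s -> h x = G (x + s) q r) ->
  derivable_pt_lim h x0 (dG (x0 + s) q r).
Proof.
  intros Hx0 Hq Hr Hh. apply is_derive_Reals.
  apply (is_derive_ext_loc (fun x => G (x + s) q r)).
  { apply (locally_interval _ x0 (- s) p_infty); simpl; auto; try lra.
    intros y Hy _. symmetry. apply Hh. lra. }
  pose proof (sigma2_pos _ _ _ Hx0 Hq Hr).
  unfold G, dG, sigma2 in *. auto_derive; [lra | field; lra].
Qed.

Lemma E_partial_a (a b c : R) : 0 < c -> 0 < a + c -> 0 < b + c ->
  derivable_pt_lim (fun x => E x b c) a (dG (a + c) c (b + c)).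
Proof.
  intros Hp Hq Hr. apply derivable_shifted_G; auto.
  intros x Hx. rewrite E_closed, G_swap by lra. reflexivity.
Qed.

Lemma E_partial_b (a b c : R) : 0 < c -> 0 < a + c -> 0 < b + c ->
  derivable_pt_lim (fun y => E a y c) b (dG (b + c) c (a + c)).
Proof.
  intros Hp Hq Hr. apply derivable_shifted_G; auto.
  intros y Hy. rewrite E_closed, G_rotate by lra. reflexivity.
Qed.

(** Along the ray (0,0,z), z > 0, E is constant (scale invariance). *)
Lemma E_partial_c_on_ray (t : R) : 0 < t -> derivable_pt_lim (fun z => E 0 0 z) t 0.
Proof.
  intros Ht. apply is_derive_Reals.
  apply (is_derive_ext_loc (fun _ => 144 * PI ^ 2)); [| auto_derive; auto].
  apply (locally_interval _ t 0 p_infty); simpl; auto.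
  intros z Hz _. simpl in Hz. rewrite E_closed by lra.
  replace (0 + z) with z by ring. pose proof (sigma2_pos z z z Hz Hz Hz).
  unfold G, sigma2 in *. field. lra.
Qed.

Lemma vertex_values_equal (p q r : R) : 0 < p -> 0 < q -> 0 < r ->
  q * (p + r) = p ^ 2 + r ^ 2 -> r * (p + q) = p ^ 2 + q ^ 2 -> q = p /\ r = p.
Proof.
  intros Hp Hq Hr Eq Er.
  assert (Hqr : (q - r) * (p + q + r) = 0) by nra.
  apply Rmult_integral in Hqr as [Hqr | Hqr]; [| lra].
  assert (Hpq : p * (q - p) = 0) by nra.
  apply Rmult_integral in Hpq as [Hpq | Hpq]; lra.
Qed.

Theorem mainTheorem3 :
  forall a b c : R, inU a b c ->
    (critical_E a b c <-> exists t : R, 0 < t /\ a = 0 /\ b = 0 /\ c = t).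
Proof.
  intros a b c HU. apply inU_vertices in HU as [Hp [Hq Hr]].
  split.
  - intros [Ha [Hb _]].
    pose proof (uniqueness_limite _ _ _ _ Ha (E_partial_a a b c Hp Hq Hr)) as Da.
    pose proof (uniqueness_limite _ _ _ _ Hb (E_partial_b a b c Hp Hq Hr)) as Db.
    symmetry in Da, Db. apply dG_zero in Da, Db; auto.
    destruct (vertex_values_equal c (a + c) (b + c)) as [Ea Eb]; auto.
    exists c. repeat split; lra.
  - intros [t [Ht [-> [-> ->]]]].
    pose proof (E_partial_a 0 0 t Ht ltac:(lra) ltac:(lra)) as Da.
    pose proof (E_partial_b 0 0 t Ht ltac:(lra) ltac:(lra)) as Db.
    replace (0 + t) with t in Da, Db by ring. rewrite dG_diagonal in Da, Db.
    split; [| split]; auto using E_partial_c_on_ray.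
Qed.
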